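(* Let $G_1$ be the graph constructed as follows: take a star with centre $c$ and leaves $v_1,v_2,v_3,v_4$, and for each $i\in\{1,2,3,4\}$ take a copy $S_i$ of $S$ in which the vertex $a$ is identified with $c$ and the vertex $b$ is identified with $v_i$ (so the edge $ab$ of $S_i$ is the edge $cv_i$), the copies $S_1,\dots,S_4$ being otherwise vertex-disjoint. Then for every subgraph $H$ of $G_1$ with maximum degree $\Delta(H)\le 3$, the graph $G_1-E(H)$ is not $3$-choosable.
   Context: $J_3$ is the graph with vertex set $\{a,b,c,d,e,f,g,h,i,j,k\}$ and edges $ab$; $ac,ad,ae,af,ag$; $bc,bd,be,bf,bg$; $cd,de,ef,fg$; $ha,hd,he$; $ia,ie,if$; $jb,jd,je$; $kb,ke,kf$. $S$ is the graph obtained from nine pairwise vertex-disjoint copies of $J_3$ by identifying all copies of $a$ into a single vertex $a$ and all copies of $b$ into a single vertex $b$, all other vertices staying distinct. A graph is $3$-choosable if for every assignment of a list of $3$ colours to each vertex there is a proper colouring choosing each vertex's colour from its list. (The resulting graph $G_1$ is planar.) *)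

From mathcomp Require Import all_boot.
Set Implicit Arguments. Unset Strict Implicit. Unset Printing Implicit Defensive.

Definition choosable (T : finType) (e : rel T) (k : nat) : Prop :=
  forall L : T -> seq nat,
    (forall v, uniq (L v) /\ size (L v) = k) ->
    exists col : T -> nat,
      (forall v, col v \in L v) /\ (forall u v, e u v -> col u != col v).

Definition del_edges (T : finType) (e h : rel T) : rel T :=
  fun x y => e x y && ~~ h x y.

Definition subgraph_maxdeg (T : finType) (e h : rel T) (d : nat) : Prop :=
  (forall x y, h x y = h y x) /\
  (forall x y, h x y -> e x y) /\
  (forall x, #|[set y | h x y]| <= d).

(* Vertices of J_3 are labelled by 'I_11 :
   a=0, b=1, c=2, d=3, e=4, f=5, g=6, h=7, i=8, j=9, k=10. *)
Definition J3_edges : seq (nat * nat) :=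
  [:: (0,1);
      (0,2); (0,3); (0,4); (0,5); (0,6);
      (1,2); (1,3); (1,4); (1,5); (1,6);
      (2,3); (3,4); (4,5); (5,6);
      (7,0); (7,3); (7,4);
      (8,0); (8,4); (8,5);
      (9,1); (9,3); (9,4);
      (10,1); (10,4); (10,5)].

(* Vertex set:
     None                      = the centre c
     Some (i, None)            = the leaf v_i   (i : 'I_4)
     Some (i, Some (j, x))     = vertex with J_3-label x+2 (i.e. one of
                                 c,d,...,k of J_3) in the j-th copy
                                 (j : 'I_9) of J_3 inside S_i. *)
Definition G1V : finType := option ('I_4 * option ('I_9 * 'I_9)).

Definition G1_lift (i : 'I_4) (j : 'I_9) (x : nat) : G1V :=
  if x == 0 then None
  else if x == 1 then Some (i, None)
  else Some (i, Some (j, inord (x - 2))).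

(* Adjacency of G_1: u ~ v iff for some i, j, some edge pq of J_3 is
   mapped onto {u, v}.  (The edge ab of each copy gives the star edge c v_i.) *)
Definition G1_adj : rel G1V := fun u v =>
  [exists i : 'I_4, exists j : 'I_9,
     has (fun pq : nat * nat =>
            ((G1_lift i j pq.1 == u) && (G1_lift i j pq.2 == v)) ||
            ((G1_lift i j pq.1 == v) && (G1_lift i j pq.2 == u)))
         J3_edges].

From mathcomp Require Import all_boot zify.
Set Implicit Arguments. Unset Strict Implicit. Unset Printing Implicit Defensive.

(* The centre c has at most three H-neighbours, so some branch S_i contains
   none of them; v_i has at most three H-neighbours, so at least six of
   the nine copies of J_3 in S_i contain none either.  In such a copy every
   deleted edge joins two of c, ..., k, and each of d, e, f loses at most three
   edges.  For every such deletion pattern, one of two fixed list assignments to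
   c, ..., k over the colours 0..3 admits no proper colouring once a and b are
   coloured 0 and 1; this is checked by exhaustive search.  Give c and v_i the
   list {0, 1, 2} and let the six clean copies carry the six ordered pairs
   (alpha, beta) of distinct colours from {0, 1, 2}, the gadget lists being renamed
   by 0, 1, 2, 3 |-> alpha, beta, 3, 4.  Whatever colours c and v_i receive, the
   copy carrying that pair cannot be coloured. *)

Definition clash (E : seq (nat * nat)) (t : seq nat) : bool :=
  has (fun pq => [&& pq.1 < size t, pq.2 < size t & nth 0 t pq.1 == nth 0 t pq.2]) E.

(* [t] colours the vertices [0 .. size t - 1] and [Ls] holds the lists of the
   following vertices.  The [if] (rather than [||]) lets the call-by-value
   [vm_compute] prune the search at the first clash. *)
Fixpoint uncolourable (E : seq (nat * nat)) (Ls : seq (seq nat)) (t : seq nat) : bool :=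
  if Ls is l :: Ls' then
    all (fun c => if clash E (rcons t c) then true else uncolourable E Ls' (rcons t c)) l
  else clash E t.

Lemma clashP E t :
  reflect (exists2 pq, pq \in E &
             [/\ pq.1 < size t, pq.2 < size t & nth 0 t pq.1 = nth 0 t pq.2])
          (clash E t).
Proof.
apply: (iffP hasP) => [[pq pqE /and3P[p_lt q_lt /eqP tpq]] | [pq pqE [p_lt q_lt tpq]]].
  by exists pq.
by exists pq; rewrite // p_lt q_lt tpq eqxx.
Qed.

Lemma clash_cat E t u : clash E t -> clash E (t ++ u).
Proof.
move=> /clashP[pq pqE [p_lt q_lt tpq]]; apply/clashP; exists pq => //.
by rewrite size_cat !nth_cat p_lt q_lt tpq !ltn_addr.
Qed.

Lemma clash_map E f t : clash E t -> clash E (map f t).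
Proof.
move=> /clashP[pq pqE [p_lt q_lt tpq]]; apply/clashP; exists pq => //.
by rewrite size_map p_lt q_lt !(nth_map 0) // tpq.
Qed.

Lemma uncolourable_map E f Ls t :
  uncolourable E Ls t -> uncolourable E (map (map f) Ls) (map f t).
Proof.
elim: Ls t => [|l Ls IHLs] t /=; first exact: clash_map.
move=> /allP tl; apply/allP => _ /mapP[c cl ->].
rewrite -map_rcons; have := tl c cl.
by case: ifP => [/(clash_map f) -> | _ /IHLs ->] //; case: ifP.
Qed.

Lemma uncolourable_sound E Ls t u :
  size u = size Ls -> (forall k, k < size u -> nth 0 u k \in nth [::] Ls k) ->
  uncolourable E Ls t -> clash E (t ++ u).
Proof.
elim: Ls t u => [|l Ls IHLs] t [|c u] //=; first by rewrite cats0.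
move=> [size_u] u_in /allP/(_ c (u_in 0 isT)); rewrite -cat_rcons.
case: ifP => [/clash_cat // | _]; apply: IHLs => // k; exact: (u_in k.+1).
Qed.

Fixpoint sublists (T : Type) (s : seq T) : seq (seq T) :=
  if s is x :: s' then [seq x :: r | r <- sublists s'] ++ sublists s' else [:: [::]].

Lemma mem_sublists (T : eqType) (s r : seq T) : subseq r s -> r \in sublists s.
Proof.
elim: s r => [|x s IHs] [|y r] //=; rewrite mem_cat.
  by rewrite IHs ?sub0seq ?orbT.
by case: eqP => [-> /IHs /(map_f (cons x)) -> | _ /IHs ->]; rewrite ?orbT.
Qed.

Definition J3_inner : seq (nat * nat) :=
  [:: (2,3); (3,4); (4,5); (5,6); (7,3); (7,4); (8,4); (8,5); (9,3); (9,4); (10,4); (10,5)].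

Definition incident (x : nat) (pq : nat * nat) : bool := (pq.1 == x) || (pq.2 == x).

Definition remaining (D : seq (nat * nat)) : seq (nat * nat) :=
  [seq pq <- J3_edges | pq \notin D].

(* Entry [x] of a gadget list assignment is the list of the J_3 vertex with
   label [x + 2]. *)
Definition gadget_lists : seq (seq (seq nat)) :=
  [:: [:: [:: 0;1;2]; [:: 0;1;2]; [:: 0;1;2]; [:: 0;1;2]; [:: 0;1;2];
          [:: 0;2;3]; [:: 0;2;3]; [:: 1;2;3]; [:: 1;2;3]];
      [:: [:: 0;1;2]; [:: 0;1;2]; [:: 0;1;3]; [:: 0;1;2]; [:: 0;1;2];
          [:: 0;2;3]; [:: 0;2;3]; [:: 1;2;3]; [:: 1;2;3]]].

Lemma gadget_lists_shape :
  {in gadget_lists, forall F, (size F == 9) && all (fun l => uniq l && (size l == 3)) F}.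
Proof. by apply/allP. Qed.

Lemma gadget_lists_suffice :
  all (fun D => all (fun x => count (incident x) D <= 3) (iota 0 11) ==>
         has (fun F => uncolourable (remaining D) F [:: 0; 1]) gadget_lists)
      (sublists J3_inner).
Proof. by vm_compute. Qed.

Definition gadget_for (D : seq (nat * nat)) : seq (seq nat) :=
  nth (head [::] gadget_lists) gadget_lists
      (find (fun F => uncolourable (remaining D) F [:: 0; 1]) gadget_lists).

Lemma gadget_for_mem D : gadget_for D \in gadget_lists.
Proof.
rewrite /gadget_for; set n := find _ _.
case: (ltnP n (size gadget_lists)) => [|n_ge]; first exact: mem_nth.
by rewrite nth_default // mem_head.
Qed.

Lemma gadget_for_uncolourable D :
  subseq D J3_inner -> (forall x, x < 11 -> count (incident x) D <= 3) ->
  uncolourable (remaining D) (gadget_for D) [:: 0; 1].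
Proof.
move=> /mem_sublists D_sub D_deg.
apply: (nth_find _ (implyP (allP gadget_lists_suffice D D_sub) _)).
by apply/allP => x; rewrite mem_iota => /andP[_]; exact: D_deg.
Qed.

Lemma card_Some_imset_le (T I : finType) (p : T -> option I) (A : {set T}) :
  #|[set k | Some k \in p @: A]| <= #|A|.
Proof.
set S := [set k | _]; rewrite -(card_imset S Some_inj).
apply: leq_trans (leq_imset_card p A).
by apply: subset_leq_card; apply/subsetP => y /imsetP[k]; rewrite inE => ? ->.
Qed.

Definition branch (y : G1V) : option 'I_4 := if y is Some (i, _) then Some i else None.

Definition copy (y : G1V) : option 'I_9 :=
  if y is Some (_, Some (j, _)) then Some j else None.

Definition clean_branch (h : rel G1V) (i : 'I_4) : Prop :=
  forall y, branch y = Some i -> ~~ h None y.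

Definition clean_copies (h : rel G1V) (i : 'I_4) : {set 'I_9} :=
  [set j | [forall x, ~~ h (Some (i, None)) (Some (i, Some (j, x)))]].

Lemma clean_branch_exists (h : rel G1V) :
  (forall x, #|[set y | h x y]| <= 3) -> exists i, clean_branch h i.
Proof.
move=> hdeg; have := leq_trans (card_Some_imset_le branch [set y | h None y]) (hdeg None).
set B := [set i | _] => B_le3.
have /set0Pn[i] : ~: B != set0.
  by rewrite -card_gt0; have := cardsC B; rewrite card_ord; lia.
rewrite !inE => iB; exists i => y yi; apply: contra iB => hy.
by rewrite -yi imset_f ?inE.
Qed.

Lemma card_clean_copies (h : rel G1V) i :
  (forall x, #|[set y | h x y]| <= 3) -> 6 <= #|clean_copies h i|.
Proof.
move=> hdeg; set N := [set y | h (Some (i, None)) y].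
have := leq_trans (card_Some_imset_le copy N) (hdeg _); set B := [set j | _] => B_le3.
have : ~: clean_copies h i \subset B.
  apply/subsetP => j; rewrite !inE negb_forall => /existsP[x]; rewrite negbK => hx.
  by apply/imsetP; exists (Some (i, Some (j, x))); rewrite ?inE.
move=> /subset_leq_card/leq_trans/(_ B_le3) Cc_le3.
have : #|clean_copies h i| + #|~: clean_copies h i| = 9 by rewrite cardsC card_ord.
lia.
Qed.

Lemma G1_adj_lift i j pq :
  pq \in J3_edges -> G1_adj (G1_lift i j pq.1) (G1_lift i j pq.2).
Proof.
by move=> pqE; apply/existsP; exists i; apply/existsP; exists j; apply/hasP; exists pq;
  rewrite ?eqxx.
Qed.

Lemma G1_lift_inner i j x : G1_lift i j x.+2 = Some (i, Some (j, inord x)).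
Proof. by rewrite /G1_lift !subSS subn0. Qed.

Lemma G1_lift_inj i j : {in [pred p | p < 11] &, injective (G1_lift i j)}.
Proof.
move=> [|[|p]] [|[|q]]; rewrite !inE //= => p_lt q_lt [/(congr1 val)].
by rewrite /= !inordK; lia.
Qed.

Definition other (x : nat) (pq : nat * nat) : nat := if pq.1 == x then pq.2 else pq.1.

Definition inner_nbrs (x : nat) : seq nat :=
  [seq other x pq | pq <- J3_inner & incident x pq].

Lemma inner_nbrs_uniq_bounded x :
  x < 11 -> uniq (inner_nbrs x) && all (fun y => y < 11) (inner_nbrs x).
Proof. by do 11![case: x => [|x] //]. Qed.

Definition deleted_in_copy (h : rel G1V) i j : seq (nat * nat) :=
  [seq pq <- J3_inner | h (G1_lift i j pq.1) (G1_lift i j pq.2)].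

Lemma count_deleted_in_copy (h : rel G1V) i j x :
  (forall u v, h u v = h v u) -> x < 11 ->
  count (incident x) (deleted_in_copy h i j) <= #|[set y | h (G1_lift i j x) y]|.
Proof.
move=> hsym /inner_nbrs_uniq_bounded/andP[nbrs_uniq /allP nbrs_lt].
set S := [seq pq <- deleted_in_copy h i j | incident x pq].
have S_nbrs : subseq [seq other x pq | pq <- S] (inner_nbrs x).
  apply: map_subseq; rewrite subseq_filter filter_all.
  exact: subseq_trans (filter_subseq _ _) (filter_subseq _ _).
rewrite -size_filter -/S cardE -(size_map (G1_lift i j \o other x)) map_comp.
apply: uniq_leq_size.
  rewrite map_inj_in_uniq ?(subseq_uniq S_nbrs) // => p q /(mem_subseq S_nbrs) p_lt.
  by move=> /(mem_subseq S_nbrs) q_lt; apply: G1_lift_inj; rewrite inE; apply: nbrs_lt.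
move=> _ /mapP[_ /mapP[pq pqS ->] ->]; rewrite mem_enum inE.
move: pqS; rewrite !mem_filter /incident /other => /and3P[/orP[]/eqP x_pq hpq _].
  by rewrite -x_pq eqxx.
by rewrite -x_pq; case: eqP => [e | _]; [rewrite -{1}e | rewrite hsym].
Qed.

Definition anchored (p q : nat) : bool := (p <= 1) && (p < q < 11).

Lemma J3_edge_cases pq :
  pq \in J3_edges -> [|| pq \in J3_inner, anchored pq.1 pq.2 | anchored pq.2 pq.1].
Proof. by move: pq; apply/allP. Qed.

Lemma anchored_edge_clean (h : rel G1V) i j p q :
  clean_branch h i -> j \in clean_copies h i -> anchored p q ->
  ~~ h (G1_lift i j p) (G1_lift i j q).
Proof.
move=> ci; rewrite inE => /forallP cj /andP[p_le1 /andP[pq q_lt]].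
case: p p_le1 pq => [|[|//]] _ pq; first by apply: ci; case: q pq q_lt => [|[|q]].
by case: q pq q_lt => [|[|q]] // _ _; apply: cj.
Qed.

Lemma remaining_edge_kept (h : rel G1V) i j pq :
  (forall u v, h u v = h v u) -> clean_branch h i -> j \in clean_copies h i ->
  pq \in remaining (deleted_in_copy h i j) -> ~~ h (G1_lift i j pq.1) (G1_lift i j pq.2).
Proof.
move=> hsym ci cj; rewrite mem_filter => /andP[pq_kept /J3_edge_cases].
case/or3P=> [pq_inner | anc | anc]; last rewrite hsym; try exact: anchored_edge_clean.
by move: pq_kept; rewrite mem_filter pq_inner andbT.
Qed.

Definition shift_colours (a b n : nat) : nat :=
  match n with 0 => a | 1 => b | n'.+2 => n'.+3 end.

Lemma shift_colours_inj a b : a != b -> a < 3 -> b < 3 -> injective (shift_colours a b).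
Proof. by move=> ab a3 b3 [|[|m]] [|[|n]] /=; lia. Qed.

Lemma clean_copy_not_list_colourable (h : rel G1V) i j (col : G1V -> nat) :
  (forall u v, h u v = h v u) -> (forall x, #|[set y | h x y]| <= 3) ->
  clean_branch h i -> j \in clean_copies h i ->
  (forall u v, del_edges G1_adj h u v -> col u != col v) ->
  ~ (forall x : 'I_9, col (Some (i, Some (j, x))) \in
       map (shift_colours (col None) (col (Some (i, None))))
           (nth [::] (gadget_for (deleted_in_copy h i j)) x)).
Proof.
move=> hsym hdeg ci cj proper col_in.
set D := deleted_in_copy h i j; set f := shift_colours _ _ in col_in.
have D_unc : uncolourable (remaining D) (gadget_for D) [:: 0; 1].
  apply: gadget_for_uncolourable; first exact: filter_subseq.
  by move=> x x_lt; apply: leq_trans (count_deleted_in_copy i j hsym x_lt) (hdeg _).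
have /andP[/eqP F9 _] := gadget_lists_shape (gadget_for_mem D).
set u := mkseq (fun x => col (G1_lift i j x.+2)) 9.
have t_eq : map f [:: 0; 1] ++ u = mkseq (col \o G1_lift i j) 11 by [].
have := uncolourable_sound (u := u) _ _ (uncolourable_map f D_unc).
rewrite t_eq size_mkseq size_map F9 => /(_ erefl) clash_col.
have {clash_col} : clash (remaining D) (mkseq (col \o G1_lift i j) 11).
  apply: clash_col => k k_lt; have k_F : k < size (gadget_for D) by rewrite F9.
  rewrite /u (nth_mkseq _ _ k_lt) (nth_map [::] _ _ k_F) G1_lift_inner.
  by rewrite -[in nth _ _ k](inordK k_lt); exact: col_in.
case/clashP=> pq pq_rem []; rewrite size_mkseq => p_lt q_lt.
rewrite (nth_mkseq _ _ p_lt) (nth_mkseq _ _ q_lt) => col_pq.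
have kept := remaining_edge_kept hsym ci cj pq_rem.
move: pq_rem; rewrite mem_filter => /andP[_ /(G1_adj_lift i j) adj].
by move: (proper _ _ (introT andP (conj adj kept))); rewrite [col _]col_pq eqxx.
Qed.

Definition colour_pairs : seq (nat * nat) :=
  [seq ab <- [seq (a, b) | a <- iota 0 3, b <- iota 0 3] | ab.1 != ab.2].

Lemma colour_pairs_valid :
  {in colour_pairs, forall ab, [&& ab.1 < 3, ab.2 < 3 & ab.1 != ab.2]}.
Proof. by apply/allP. Qed.

Lemma mem_colour_pairs a b : a < 3 -> b < 3 -> a != b -> (a, b) \in colour_pairs.
Proof. by move=> a3 b3 ab; rewrite mem_filter ab allpairs_f ?mem_iota. Qed.

Definition copy_lists (h : rel G1V) (i : 'I_4) (j : 'I_9) (x : 'I_9) : seq nat :=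
  let k := index j (enum (clean_copies h i)) in
  if k < size colour_pairs then
    let ab := nth (0, 0) colour_pairs k in
    map (shift_colours ab.1 ab.2) (nth [::] (gadget_for (deleted_in_copy h i j)) x)
  else iota 0 3.

Definition G1_lists (h : rel G1V) (i : 'I_4) (y : G1V) : seq nat :=
  if y is Some (i', Some (j, x)) then
    if i' == i then copy_lists h i j x else iota 0 3
  else iota 0 3.

Lemma G1_lists_uniq_size h i y : uniq (G1_lists h i y) /\ size (G1_lists h i y) = 3.
Proof.
case: y => [[i' [[j x]|]]|]; [rewrite /G1_lists; case: eqP => // _ | by [] | by []].
rewrite /copy_lists; case: ifP => // k_lt; set ab := nth _ _ _.
have /and3P[a_lt b_lt ab_ne] := colour_pairs_valid (mem_nth (0, 0) k_lt).
have /andP[/eqP F9 /allP F_ok] :=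
  gadget_lists_shape (gadget_for_mem (deleted_in_copy h i j)).
have x_lt : x < size (gadget_for (deleted_in_copy h i j)) by rewrite F9.
have /andP[l_uniq /eqP l_size] := F_ok _ (mem_nth [::] x_lt).
by rewrite (map_inj_uniq (shift_colours_inj ab_ne a_lt b_lt)) size_map.
Qed.

Theorem theorem5 :
  forall h : rel G1V,
    subgraph_maxdeg G1_adj h 3 ->
    ~ choosable (del_edges G1_adj h) 3.
Proof.
move=> h [hsym [_ hdeg]] choosable3.
have [i ci] := clean_branch_exists hdeg.
have [col [col_in proper]] := choosable3 _ (G1_lists_uniq_size h i).
set a := col None; set b := col (Some (i, None)).
have a_lt : a < 3 by have := col_in None; rewrite mem_iota.
have b_lt : b < 3 by have := col_in (Some (i, None)); rewrite mem_iota.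
have ab_ne : a != b.
  by apply: proper; rewrite /del_edges (G1_adj_lift i ord0 (pq := (0, 1))) // ci.
set C := enum (clean_copies h i); set k := index (a, b) colour_pairs.
have k_lt : k < size colour_pairs by rewrite index_mem mem_colour_pairs.
have k_C : k < size C by rewrite -cardE; exact: leq_trans k_lt (card_clean_copies i hdeg).
set j := nth ord0 C k.
have j_clean : j \in clean_copies h i by rewrite -mem_enum mem_nth.
have j_idx : index j C = k by rewrite index_uniq ?enum_uniq.
apply: (clean_copy_not_list_colourable hsym hdeg ci j_clean proper) => x.
have := col_in (Some (i, Some (j, x))).
by rewrite /G1_lists eqxx /copy_lists -/C j_idx k_lt nth_index // mem_colour_pairs.
Qed.
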